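(* The full subcategory of $\mathrm{Vect}_{\mathbb{F}}^{\mathbb{M}^{\circ}}$ consisting of pointwise finite-dimensional, sequentially continuous functors is a weak Serre subcategory: if $F_1\to F_2\to F_3\to F_4\to F_5$ is an exact sequence of functors $\mathbb{M}^{\circ}\to\mathrm{Vect}_{\mathbb{F}}$ with $F_1,F_2,F_4,F_5$ pointwise finite-dimensional and sequentially continuous, then $F_3$ is pointwise finite-dimensional and sequentially continuous.
   Context: Fix a field $\mathbb{F}$. Equip $\mathbb{R}^2$ with the partial order $(x,y)\preceq(x',y')$ iff $x'\le x$ and $y\le y'$. Fix reals $a<b$ and let $\mathbb{M}=\{(x,y): a\le x+y\le b\}$. Functors $\mathbb{M}^{\circ}\to\mathrm{Vect}_{\mathbb{F}}$ are contravariant in $\preceq$. A functor $G$ is sequentially continuous if for every $\preceq$-increasing sequence $(u_k)$ in $\mathbb{M}$ converging (Euclidean) to $u$, the natural map $G(u)\to\varprojlim_kG(u_k)$ is an isomorphism. *)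

From HB Require Import structures.
From mathcomp Require Import all_boot all_order all_algebra.
From mathcomp Require Import all_classical all_reals all_analysis.
From mathcomp Require Import Rstruct Rstruct_topology.
From Stdlib Require Import Rdefinitions.
Set Implicit Arguments. Unset Strict Implicit. Unset Printing Implicit Defensive.
Import Order.TTheory GRing.Theory Num.Theory.
Local Open Scope ring_scope.
Local Open Scope classical_set_scope.

Definition R2 := (Rdefinitions.R * Rdefinitions.R)%type.

Definition ple (p q : R2) : bool := (q.1 <= p.1) && (p.2 <= q.2).

Definition Mpt (a b : Rdefinitions.R) :=
  {p : R2 | (a <= p.1 + p.2) && (p.1 + p.2 <= b)}.

Definition Mle a b (u v : Mpt a b) : bool := ple (val u) (val v).

Record functor (F : fieldType) (a b : Rdefinitions.R) := Functor {
  fobj : Mpt a b -> lmodType F;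
  fmap : forall u v : Mpt a b, Mle u v -> {linear fobj v -> fobj u};
  fmap_id : forall (u : Mpt a b) (h : Mle u u) x, fmap h x = x;
  fmap_comp : forall (u v w : Mpt a b) (h1 : Mle u v) (h2 : Mle v w)
      (h3 : Mle u w) x, fmap h3 x = fmap h1 (fmap h2 x)
}.

Record nat_trans (F : fieldType) a b (G H : functor F a b) := NatTrans {
  ntc : forall u, {linear fobj G u -> fobj H u};
  ntc_nat : forall u v (h : Mle u v) x,
      ntc u (fmap G h x) = fmap H h (ntc v x)
}.

Definition exact_at (F : fieldType) a b (G H K : functor F a b)
  (f : nat_trans G H) (g : nat_trans H K) : Prop :=
  forall u (y : fobj H u), ntc g u y = 0 <-> exists x, ntc f u x = y.

Definition finite_dim (F : fieldType) (V : lmodType F) : Prop :=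
  exists s : seq V, forall v : V,
    exists c : 'I_(size s) -> F, v = \sum_(i < size s) c i *: s`_i.

Definition pfd (F : fieldType) a b (G : functor F a b) : Prop :=
  forall u, finite_dim (fobj G u).

(* Sequential continuity: for every ⪯-increasing sequence (u_k) in M
   converging (Euclidean topology on R^2) to w, the natural map
   G(w) -> lim_k G(u_k),  x |-> (G(u_k ⪯ w) x)_k,  is a bijection onto the
   inverse limit (compatible families).  The hypothesis hle : u_k ⪯ w is
   needed only to name the maps; it follows from the others. *)
Definition seq_cont (F : fieldType) a b (G : functor F a b) : Prop :=
  forall (u : nat -> Mpt a b) (w : Mpt a b)
         (hinc : forall k, Mle (u k) (u k.+1))
         (hle : forall k, Mle (u k) w),
    (fun k => val (u k)) @ \oo --> val w ->
    (forall x x' : fobj G w,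
        (forall k, fmap G (hle k) x = fmap G (hle k) x') -> x = x') /\
    (forall y : forall k, fobj G (u k),
        (forall k, y k = fmap G (hinc k) (y k.+1)) ->
        exists x : fobj G w, forall k, fmap G (hle k) x = y k).

From Pilot Require Import Defs.
From HB Require Import structures.
From mathcomp Require Import all_boot all_order all_algebra.
From mathcomp Require Import all_classical all_reals all_analysis.
From mathcomp Require Import Rstruct Rstruct_topology.
Import GRing.Theory.
Local Open Scope ring_scope.

(* At each point [F3] is finite-dimensional: it is spanned by the image of
   [F2] together with preimages of a basis of the image of [F3] in [F4].  For
   continuity fix an increasing sequence [u k --> w]; the comparison maps into
   the inverse limits are bijective for [F1], [F2], [F4], [F5], and the
   four-lemma chase for [F3] only needs to lift coherent families through [f1]
   and [f2].  Such lifts exist by a Mittag-Leffler argument: the images in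
   [F_i (u k)] of the fibres over later stages form descending chains of
   cosets, and descending chains of subspaces of a finite-dimensional space
   stabilise. *)

Section Subspaces.
Context {F : fieldType}.

Definition subspace {V : lmodType F} (P : V -> Prop) :=
  [/\ P 0, forall x y, P x -> P y -> P (x + y) & forall c x, P x -> P (c *: x)].

Lemma subspace_sum {V : lmodType F} {P : V -> Prop} {m}
    (c : 'I_m -> F) (g : 'I_m -> V) :
  subspace P -> (forall i, P (g i)) -> P (\sum_i c i *: g i).
Proof. by move=> [P0 PD PZ] Pg; elim/big_ind: _ => // i _; apply: PZ. Qed.

Lemma subspace_preim {U V : lmodType F} (f : {linear U -> V}) {P : V -> Prop} :
  subspace P -> subspace (fun x => P (f x)).
Proof.
move=> [P0 PD PZ]; split=> [|x y|c x] /=; first by rewrite linear0.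
  by rewrite linearD; apply: PD.
by rewrite linearZ; apply: PZ.
Qed.

Lemma image_subspace {U V : lmodType F} (f : {linear U -> V}) :
  subspace (fun y => exists x, f x = y).
Proof.
split=> [|_ _ [x <-] [y <-]|c _ [x <-]]; first by exists 0; rewrite linear0.
  by exists (x + y); rewrite linearD.
by exists (c *: x); rewrite linearZ.
Qed.

Lemma row_subspace_submx {n} {P : 'rV[F]_n -> Prop} :
  subspace P -> exists m (A : 'M[F]_(m, n)), forall v, P v <-> (v <= A)%MS.
Proof.
move=> hP.
pose rank_in_P r :=
  `[< exists m (A : 'M[F]_(m, n)), (forall i, P (row i A)) /\ \rank A = r >].
have ex0 : exists r, rank_in_P r.
  exists 0%N; apply/asboolP; exists 0%N, (0 : 'M[F]_(0, n)); split; first by case.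
  by apply/eqP; rewrite -leqn0 rank_leq_row.
have ub r : rank_in_P r -> (r <= n)%N by move=> /asboolP [m [A [_ <-]]]; exact: rank_leq_col.
case: (ex_maxnP ex0 ub) => r /asboolP [m [A [PA rkA]]] rk_max.
exists m, A => v; split; last first.
  by move/submxP => [D ->]; rewrite mulmx_sum_row; apply: subspace_sum.
move=> Pv; apply/negPn/negP => vA.
have sAB : (A <= col_mx A v)%MS by rewrite -addsmxE addsmxSl.
have rkB : rank_in_P (\rank (col_mx A v)).
  apply/asboolP; exists (m + 1)%N, (col_mx A v); split => // i.
  by rewrite -[i]splitK; case: (fintype.split i) => j /=; rewrite ?rowKu ?rowKd ?row_id.
have sBA : (col_mx A v <= A)%MS.
  by rewrite -(mxrank_leqif_sup sAB).2 eqn_leq (mxrank_leqif_sup sAB).1 rkA rk_max.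
by move: vA; rewrite (submx_trans _ sBA) // -addsmxE addsmxSr.
Qed.

(* Take [J] at which the rank of the row space of [P J] is minimal. *)
Lemma row_subspace_chain_stationary {n} {P : nat -> 'rV[F]_n -> Prop} :
  (forall j, subspace (P j)) -> (forall j v, P j.+1 v -> P j v) ->
  exists J, forall j, (J <= j)%N -> forall v, P J v -> P j v.
Proof.
move=> hP hdec.
have dec i j : (i <= j)%N -> forall v, P j v -> P i v.
  by move=> /subnK <-; elim: (j - i)%N => // d IH v; rewrite addSn => /hdec /IH.
pose rank_of r :=
  `[< exists j m (A : 'M[F]_(m, n)), (forall v, P j v <-> (v <= A)%MS) /\ \rank A = r >].
have ex0 : exists r, rank_of r.
  have [m [A PA]] := row_subspace_submx (hP 0%N).
  by exists (\rank A); apply/asboolP; exists 0%N, m, A.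
case: (ex_minnP ex0) => r /asboolP [J [m [A [PA rkA]]]] rk_min.
exists J => j Jj v /PA vA.
have [m' [B PB]] := row_subspace_submx (hP j).
have BA : (B <= A)%MS.
  by apply/row_subP => i; apply/PA; apply: (dec J j Jj); apply/PB; exact: row_sub.
have AB : (A <= B)%MS.
  rewrite -(mxrank_leqif_sup BA).2 eqn_leq (mxrank_leqif_sup BA).1 rkA.
  by apply: rk_min; apply/asboolP; exists j, m', B.
by apply/PB; apply: submx_trans AB.
Qed.

End Subspaces.

Section FiniteDim.
Context {F : fieldType} {V : lmodType F}.

Definition lincomb {n} (g : 'I_n -> V) (c : 'rV[F]_n) : V := \sum_i c 0 i *: g i.

Fact lincomb_is_linear {n} (g : 'I_n -> V) : linear (lincomb g).
Proof.
move=> k x y; rewrite /lincomb scaler_sumr -big_split.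
by apply: eq_bigr => i _; rewrite !mxE scalerDl scalerA.
Qed.

HB.instance Definition _ n (g : 'I_n -> V) :=
  GRing.isLinear.Build F 'rV[F]_n V *:%R (lincomb g) (lincomb_is_linear g).

Lemma lincomb_row {n} (g : 'I_n -> V) (c : 'I_n -> F) :
  lincomb g (\row_i c i) = \sum_i c i *: g i.
Proof. by apply: eq_bigr => i _; rewrite mxE. Qed.

Lemma finite_dimP : finite_dim V <->
  exists n (g : 'I_n -> V), forall v, exists c : 'I_n -> F, v = \sum_i c i *: g i.
Proof.
split=> [[s span_s]|[[|n] [g span_g]]]; first by exists (size s), (fun i => s`_i).
  by exists [::] => v; exists (fun _ => 0); have [c ->] := span_g v; rewrite !big_ord0.
pose s := mkseq (fun i => g (inord i)) n.+1.
exists s => v; have [c ->] := span_g v.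
exists (fun i => c (inord i)); rewrite -(big_mkord xpredT (fun i => c (inord i) *: s`_i)).
by rewrite size_mkseq big_mkord; apply: eq_bigr => i _; rewrite nth_mkseq // inord_val.
Qed.

Lemma finite_dim_span2 {n m} (g1 : 'I_n -> V) (g2 : 'I_m -> V) :
  (forall v, exists c1 c2, v = \sum_i c1 i *: g1 i + \sum_i c2 i *: g2 i) ->
  finite_dim V.
Proof.
move=> span12; apply/finite_dimP.
pose glue T (t1 : 'I_n -> T) (t2 : 'I_m -> T) (i : 'I_(n + m)) :=
  match fintype.split i with inl j => t1 j | inr j => t2 j end.
exists (n + m), (glue _ g1 g2) => v; have [c1 [c2 ->]] := span12 v.
exists (glue _ c1 c2); rewrite big_split_ord; congr (_ + _); apply: eq_bigr => j _.
  by rewrite /glue (unsplitK (inl j)).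
by rewrite /glue (unsplitK (inr j)).
Qed.

Lemma finite_dim_chain_stationary {P : nat -> V -> Prop} :
  finite_dim V -> (forall j, subspace (P j)) -> (forall j v, P j.+1 v -> P j v) ->
  exists J, forall j, (J <= j)%N -> forall v, P J v -> P j v.
Proof.
move=> /finite_dimP [n [g span_g]] hP hdec.
have [J HJ] := row_subspace_chain_stationary
  (fun j => subspace_preim (lincomb g) (hP j)) (fun j c => hdec j (lincomb g c)).
exists J => j Jj v; have [c ->] := span_g v; rewrite -lincomb_row; exact: HJ.
Qed.

Lemma finite_dim_subspace_span {P : V -> Prop} : finite_dim V -> subspace P ->
  exists m (g : 'I_m -> V), (forall i, P (g i)) /\
    forall v, P v -> exists c : 'I_m -> F, v = \sum_i c i *: g i.
Proof.
move=> /finite_dimP [n [g0 span_g0]] hP.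
have [m [A PA]] := row_subspace_submx (subspace_preim (lincomb g0) hP).
exists m, (fun i => lincomb g0 (row i A)).
split=> [i|v Pv]; first by apply/PA; exact: row_sub.
have [c vE] := span_g0 v.
have /submxP [D cA] : (\row_i c i <= A)%MS by apply/PA; rewrite /= lincomb_row -vE.
exists (fun i => D 0 i); rewrite vE -lincomb_row cA mulmx_sum_row linear_sum.
by apply: eq_bigr => i _; rewrite linearZ.
Qed.

End FiniteDim.

Lemma finite_dim_exact_middle {F : fieldType} {U V W : lmodType F}
    (f : {linear U -> V}) (g : {linear V -> W}) :
  (forall y, g y = 0 -> exists x, f x = y) ->
  finite_dim U -> finite_dim W -> finite_dim V.
Proof.
move=> ker_sub_im /finite_dimP [n [gU span_U]] fdW.
have [m [gW [img span_img]]] := finite_dim_subspace_span fdW (image_subspace g).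
have [xs gxs] := choice img.
apply: (finite_dim_span2 (fun i => f (gU i)) xs) => v.
have [d gv] := span_img (g v) (ex_intro _ v erefl).
have [x fx] : exists x, f x = v - \sum_i d i *: xs i.
  apply: ker_sub_im; rewrite linearB linear_sum gv /=; apply/eqP; rewrite subr_eq0.
  by apply/eqP/eq_bigr => i _; rewrite linearZ /= gxs.
have [c xE] := span_U x; exists c, d.
rewrite -[LHS](subrK (\sum_i d i *: xs i)) -fx xE linear_sum.
by congr (_ + _); apply: eq_bigr => i _; rewrite linearZ.
Qed.

Definition compatible {F : fieldType} {X : nat -> lmodType F}
  (r : forall k, {linear X k.+1 -> X k}) (c : forall k, X k) :=
  forall k, c k = r k (c k.+1).

Lemma compatibleB {F : fieldType} {X : nat -> lmodType F}
    {r : forall k, {linear X k.+1 -> X k}} {c1 c2 : forall k, X k} :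
  compatible r c1 -> compatible r c2 -> compatible r (fun k => c1 k - c2 k).
Proof. by move=> h1 h2 k; rewrite linearB /= -h1 -h2. Qed.

Section MittagLeffler.
Context {F : fieldType} {V W : nat -> lmodType F}.
Variables (p : forall k, {linear V k.+1 -> V k}) (q : forall k, {linear W k.+1 -> W k}).
Variable h : forall k, {linear V k -> W k}.
Hypothesis h_nat : forall k v, h k (p k v) = q k (h k.+1 v).
Hypothesis fdV : forall k, finite_dim (V k).

(* [from_fiber c j k] is the image in [V k] of the fiber of [h] over [c (k + j)]. *)
Fixpoint from_fiber (c : forall k, W k) (j : nat) : forall k, V k -> Prop :=
  if j is j'.+1 then fun k v => exists2 v', from_fiber c j' k.+1 v' & p k v' = v
  else fun k v => h k v = c k.

Lemma from_fiber_succ {c} : compatible q c ->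
  forall j k v, from_fiber c j.+1 k v -> from_fiber c j k v.
Proof.
move=> cc; elim=> [|j IH] k v /= [v' hv' <-]; first by rewrite h_nat hv' -cc.
by exists v' => //; apply: IH.
Qed.

Lemma from_fiber_le {c i j k v} : compatible q c -> (i <= j)%N ->
  from_fiber c j k v -> from_fiber c i k v.
Proof.
move=> cc /subnK <-; elim: (j - i)%N => // d IH.
by rewrite addSn => /from_fiber_succ-/(_ cc); exact: IH.
Qed.

Lemma from_fiber_exists {c} : (forall k, exists v, h k v = c k) ->
  forall j k, exists v, from_fiber c j k v.
Proof.
move=> hc; elim=> [|j IH] k; first exact: hc.
have [v hv] := IH k.+1.
by exists (p k v), v.
Qed.

Lemma from_fiberP {c1 c2 c3} {a : F} {j k v1 v2} :
  (forall k, c3 k = a *: c1 k + c2 k) ->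
  from_fiber c1 j k v1 -> from_fiber c2 j k v2 -> from_fiber c3 j k (a *: v1 + v2).
Proof.
move=> c3E; elim: j k v1 v2 => [|j IH] k v1 v2 /=.
  by move=> hv1 hv2; rewrite linearP hv1 hv2 c3E.
move=> [x1 hx1 <-] [x2 hx2 <-]; exists (a *: x1 + x2); last by rewrite linearP.
exact: IH.
Qed.

Lemma from_fiber0_subspace j k : subspace (from_fiber (fun k => 0) j k).
Proof.
have f0 : from_fiber (fun k => 0) j k 0.
  elim: j k => [|j IH] k /=; first exact: linear0.
  by exists 0; [exact: IH | rewrite linear0].
have c0E (a : F) k' : (0 : W k') = a *: 0 + 0 by rewrite scaler0 addr0.
split=> [//|x y fx fy|a x fx].
  by rewrite -[x]scale1r; apply: from_fiberP fx fy => k'; apply: c0E.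
by rewrite -[a *: x]addr0; apply: from_fiberP fx f0 => k'; apply: c0E.
Qed.

Section Lift.
Variable c : forall k, W k.
Hypotheses (c_compat : compatible q c) (c_im : forall k, exists v, h k v = c k).

Definition stable k v := forall j, from_fiber c j k v.

(* Within [V k] the sets [from_fiber c j k] are translates of the descending
   subspaces [from_fiber 0 j k], which stabilise by finite dimensionality. *)
Lemma stable_from_fiber k : exists J, forall v, from_fiber c J k v -> stable k v.
Proof.
have compat0 : compatible q (fun k => 0) by move=> k'; rewrite linear0.
have [J HJ] := finite_dim_chain_stationary (fdV k) (from_fiber0_subspace ^~ k)
  (fun j => from_fiber_succ compat0 j k).
exists J => v hv j; have [jJ|Jj] := leqP j J; first exact: from_fiber_le c_compat jJ hv.
have [w hw] := from_fiber_exists c_im j k.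
have hwJ := from_fiber_le c_compat (ltnW Jj) hw.
have d0 : from_fiber (fun k => 0) J k (-1 *: w + v).
  by apply: from_fiberP hwJ hv => k'; rewrite scaleN1r addNr.
rewrite -[v](addNKr w) -[w in w + _]scale1r.
apply: (from_fiberP (c2 := fun k => 0)) hw _ => [k'|]; first by rewrite scale1r addr0.
by rewrite -scaleN1r; apply: HJ d0; exact: ltnW.
Qed.

Lemma stable_exists : exists v, stable 0 v.
Proof.
have [J HJ] := stable_from_fiber 0; have [v hv] := from_fiber_exists c_im J 0.
by exists v; apply: HJ.
Qed.

Lemma stable_succ {k v} : stable k v -> exists2 v', stable k.+1 v' & p k v' = v.
Proof.
move=> sv; have [J HJ] := stable_from_fiber k.+1; have [v' hv' <-] := sv J.+1.
by exists v' => //; apply: HJ.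
Qed.

Lemma compatible_lift :
  exists2 z : forall k, V k, forall k, h k (z k) = c k & compatible p z.
Proof.
pose T k := {v : V k | stable k v}.
have [v0 s0] := cid stable_exists.
have step k (x : T k) : {y : T k.+1 | p k (sval y) = sval x}.
  by have [v' sv' e] := cid2 (stable_succ (svalP x)); exists (exist _ v' sv').
pose z := nat_rect T (exist _ v0 s0) (fun k x => sval (step k x)).
exists (fun k => sval (z k)) => k; first exact: (svalP (z k) 0%N).
by rewrite /= (svalP (step k (z k))).
Qed.

End Lift.
End MittagLeffler.

Section ExactSequentialLimits.
Context {F : fieldType} {a b : Rdefinitions.R}.
Variables (u : nat -> Mpt a b) (w : Mpt a b).
Variables (hinc : forall k, Mle (u k) (u k.+1)) (hle : forall k, Mle (u k) w).

Definition coherent (G : functor F a b) := compatible (fun k => Defs.fmap G (hinc k)).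

Definition limit_injective (G : functor F a b) :=
  forall x x' : fobj G w,
    (forall k, Defs.fmap G (hle k) x = Defs.fmap G (hle k) x') -> x = x'.

Definition limit_surjective (G : functor F a b) :=
  forall y, coherent G y -> exists x : fobj G w, forall k, Defs.fmap G (hle k) x = y k.

Lemma coherent_restrict {G : functor F a b} (x : fobj G w) :
  coherent G (fun k => Defs.fmap G (hle k) x).
Proof. by move=> k; apply: Defs.fmap_comp. Qed.

Lemma coherent_map {G H : functor F a b} (f : nat_trans G H) {y} :
  coherent G y -> coherent H (fun k => ntc f (u k) (y k)).
Proof. by move=> y_coh k; rewrite {1}y_coh ntc_nat. Qed.

Lemma coherent_lift {G H : functor F a b} (f : nat_trans G H) {y} :
  pfd G -> coherent H y -> (forall k, exists x, ntc f (u k) x = y k) ->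
  exists2 z, forall k, ntc f (u k) (z k) = y k & coherent G z.
Proof.
by move=> fdG; apply: compatible_lift => [k v|k]; [apply: ntc_nat | apply: fdG].
Qed.

Context {F1 F2 F3 F4 F5 : functor F a b}.
Context {f1 : nat_trans F1 F2} {f2 : nat_trans F2 F3}.
Context {f3 : nat_trans F3 F4} {f4 : nat_trans F4 F5}.
Hypotheses (ex12 : exact_at f1 f2) (ex23 : exact_at f2 f3) (ex34 : exact_at f3 f4).

Lemma limit_injective_exact : pfd F1 -> limit_surjective F1 ->
  limit_injective F2 -> limit_injective F4 -> limit_injective F3.
Proof.
move=> fd1 surj1 inj2 inj4 x x' hx; apply/subr0_eq.
have d_lim0 k : Defs.fmap F3 (hle k) (x - x') = 0 by rewrite linearB /= hx subrr.
have [y fy] : exists y, ntc f2 w y = x - x'.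
  by apply/(ex23 w _).1/inj4 => k; rewrite -ntc_nat d_lim0 !linear0.
have [z f1z z_coh] : exists2 z,
    forall k, ntc f1 (u k) (z k) = Defs.fmap F2 (hle k) y & coherent F1 z.
  apply: (coherent_lift f1 fd1 (coherent_restrict y)) => k.
  by apply/(ex12 (u k) _).1; rewrite ntc_nat fy d_lim0.
have [x1 hx1] := surj1 z z_coh.
have y_im : y = ntc f1 w x1 by apply: inj2 => k; rewrite -ntc_nat hx1 f1z.
by rewrite -fy y_im; apply/(ex12 w _).2; exists x1.
Qed.

Lemma limit_surjective_exact : pfd F2 -> limit_surjective F2 ->
  limit_surjective F4 -> limit_injective F5 -> limit_surjective F3.
Proof.
move=> fd2 surj2 surj4 inj5 y y_coh.
have [v hv] := surj4 _ (coherent_map f3 y_coh).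
have [x' f3x'] : exists x', ntc f3 w x' = v.
  apply/(ex34 w v).1/inj5 => k; rewrite -ntc_nat hv linear0.
  by apply/(ex34 (u k) _).2; exists (y k).
have [z f2z z_coh] : exists2 z,
    forall k, ntc f2 (u k) (z k) = y k - Defs.fmap F3 (hle k) x' & coherent F2 z.
  apply: (coherent_lift f2 fd2 (compatibleB y_coh (coherent_restrict x'))) => k.
  by apply/(ex23 (u k) _).1; rewrite linearB /= ntc_nat f3x' hv subrr.
have [x2 hx2] := surj2 z z_coh.
by exists (x' + ntc f2 w x2) => k; rewrite linearD /= -ntc_nat hx2 f2z subrKC.
Qed.

End ExactSequentialLimits.

Theorem lemma3p20 (F : fieldType) (a b : Rdefinitions.R)
  (hab : (a < b)%R)
  (F1 F2 F3 F4 F5 : functor F a b)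
  (f1 : nat_trans F1 F2) (f2 : nat_trans F2 F3)
  (f3 : nat_trans F3 F4) (f4 : nat_trans F4 F5) :
  exact_at f1 f2 -> exact_at f2 f3 -> exact_at f3 f4 ->
  pfd F1 -> seq_cont F1 -> pfd F2 -> seq_cont F2 ->
  pfd F4 -> seq_cont F4 -> pfd F5 -> seq_cont F5 ->
  pfd F3 /\ seq_cont F3.
Proof.
move=> ex12 ex23 ex34 fd1 cont1 fd2 cont2 fd4 cont4 fd5 cont5; split.
  by move=> t; apply: finite_dim_exact_middle (fun y => (ex23 t y).1) (fd2 t) (fd4 t).
move=> u w hinc hle conv.
have [_ surj1] := cont1 u w hinc hle conv; have [inj2 surj2] := cont2 u w hinc hle conv.
have [inj4 surj4] := cont4 u w hinc hle conv; have [inj5 _] := cont5 u w hinc hle conv.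
split; first exact: limit_injective_exact ex12 ex23 fd1 surj1 inj2 inj4.
exact: limit_surjective_exact ex23 ex34 fd2 surj2 surj4 inj5.
Qed.
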